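(* For $n=0,1,2,\ldots$ let $R_n=\sum_{k=0}^n\binom{n}{k}\binom{n+k}{k}\frac{1}{2k-1}$, let $r_n=R_{n+1}/R_n$, and for $n\geq 1$ let $$b_n=3+2\sqrt{2}-\frac{3(41\sqrt{2}+58)}{(14\sqrt{2}+20)n}=\left(3-\frac{9}{2n}\right)+\sqrt{2}\left(2-\frac{3}{n}\right).$$ Then for all $n\geq 3$, $b_n<r_n<b_{n+1}$. *)

From Stdlib Require Import Reals Lra Lia.
Open Scope R_scope.

Definition Rseq (n : nat) : R :=
  sum_f_R0 (fun k => C n k * C (n + k) k / (2 * INR k - 1)) n.

Definition rseq (n : nat) : R := Rseq (S n) / Rseq n.

Definition bseq (n : nat) : R :=
  3 + 2 * sqrt 2 - 3 * (41 * sqrt 2 + 58) / ((14 * sqrt 2 + 20) * INR n).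

From Stdlib Require Import Reals Arith Lra Lia Psatz.
Open Scope R_scope.

(* Zeilberger's algorithm gives the recurrence
   (n+3) R_(n+3) = (7n+13) R_(n+2) - (7n+15) R_(n+1) + (n+1) R_n,
   whose characteristic polynomial (x - 1)(x^2 - 6x + 1) has dominant root
   lam = 3 + 2 sqrt 2; note b_n = lam (1 - 3/(2n)).  Dividing by R_(n+2)
   expresses r_(n+2) as a function of r_n and r_(n+1) that is decreasing in r_n
   and increasing in r_(n+1).  Hence if r_n and r_(n+1) lie in (b_n, b_(n+1))
   and (b_(n+1), b_(n+2)), then r_(n+2) is squeezed between its values at
   (b_(n+1), b_(n+1)) and (b_n, b_(n+2)), and these lie in (b_(n+2), b_(n+3))
   for n >= 4 by an explicit rational inequality in n and lam.  Induction
   starts from R_3, ..., R_6 = 25, 87, 329, 1359. *)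

(* Stdlib's [C m k] is not 0 for [k > m] (truncated subtraction), hence the guard. *)
Definition binom_prod (m k : nat) : R :=
  if (k <=? m)%nat then C m k * C (m + k) k else 0.

Lemma binom_prod_fact (m k : nat) : (k <= m)%nat ->
  binom_prod m k = INR (fact (m + k)) / (INR (fact k) ^ 2 * INR (fact (m - k))).
Proof.
  intros Hkm. unfold binom_prod, C.
  rewrite (proj2 (Nat.leb_le k m) Hkm).
  replace (m + k - k)%nat with m by lia.
  pose proof (INR_fact_neq_0 m). pose proof (INR_fact_neq_0 k).
  pose proof (INR_fact_neq_0 (m - k)).
  field. auto.
Qed.

Lemma binom_prod_out (m k : nat) : (m < k)%nat -> binom_prod m k = 0.
Proof.
  intros Hmk. unfold binom_prod.
  rewrite (proj2 (Nat.leb_gt k m) Hmk). reflexivity.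
Qed.

Lemma binom_prod_succ_l (m k : nat) :
  binom_prod (S m) k * (INR m + 1 - INR k) = binom_prod m k * (INR m + 1 + INR k).
Proof.
  destruct (le_lt_dec k m) as [Hkm | Hmk].
  - rewrite !binom_prod_fact by lia.
    replace (S m + k)%nat with (S (m + k)) by lia.
    replace (S m - k)%nat with (S (m - k)) by lia.
    rewrite !fact_simpl, !mult_INR, !S_INR, plus_INR, minus_INR by exact Hkm.
    pose proof (INR_fact_neq_0 (m + k)). pose proof (INR_fact_neq_0 k).
    pose proof (INR_fact_neq_0 (m - k)).
    pose proof (le_INR _ _ Hkm).
    field. repeat split; auto; lra.
  - rewrite (binom_prod_out m k Hmk).
    destruct (Nat.eq_dec k (S m)) as [-> | Hk].
    + rewrite S_INR. ring.
    + rewrite binom_prod_out by lia. ring.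
Qed.

Lemma binom_prod_succ_r (m k : nat) :
  binom_prod m (S k) * (INR k + 1) ^ 2 = binom_prod m k * (INR m + INR k + 1) * (INR m - INR k).
Proof.
  destruct (le_lt_dec (S k) m) as [Hkm | Hmk].
  - rewrite !binom_prod_fact by lia.
    replace (m + S k)%nat with (S (m + k)) by lia.
    replace (m - k)%nat with (S (m - S k)) by lia.
    rewrite !fact_simpl, !mult_INR, !S_INR, plus_INR, minus_INR by exact Hkm.
    rewrite S_INR.
    pose proof (INR_fact_neq_0 (m + k)). pose proof (INR_fact_neq_0 k).
    pose proof (INR_fact_neq_0 (m - S k)).
    pose proof (le_INR _ _ Hkm). rewrite S_INR in *. pose proof (pos_INR k).
    field. repeat split; auto; lra.
  - rewrite (binom_prod_out m (S k) Hmk).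
    destruct (Nat.eq_dec k m) as [-> | Hk].
    + ring.
    + rewrite binom_prod_out by lia. ring.
Qed.

Lemma twice_INR_minus_1_neq_0 (k : nat) : 2 * INR k - 1 <> 0.
Proof.
  destruct k as [|k].
  - simpl. lra.
  - rewrite S_INR. pose proof (pos_INR k). lra.
Qed.

Lemma Rseq_binom_prod (m N : nat) : (m <= N)%nat ->
  Rseq m = sum_f_R0 (fun k => binom_prod m k / (2 * INR k - 1)) N.
Proof.
  induction 1 as [| N HmN IH].
  - apply sum_eq. intros k Hk. rewrite binom_prod_fact by exact Hk.
    unfold C. replace (m + k - k)%nat with m by lia.
    pose proof (INR_fact_neq_0 m). pose proof (INR_fact_neq_0 k).
    pose proof (INR_fact_neq_0 (m - k)).
    field. repeat split; auto. apply twice_INR_minus_1_neq_0.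
  - simpl. rewrite binom_prod_out by lia. rewrite IH. unfold Rdiv. ring.
Qed.

Lemma sum_f_R0_telescope (g : nat -> R) (N : nat) :
  sum_f_R0 (fun k => g (S k) - g k) N = g (S N) - g O.
Proof. induction N as [| N IH]; simpl; [| rewrite IH]; ring. Qed.

Lemma eq_div_of_mul_eq (x y u v : R) : x * v = y * u -> v <> 0 -> x = y * u / v.
Proof. intros H Hv. rewrite <- H. field. exact Hv. Qed.

(* The certificate produced by Zeilberger's algorithm for [Rseq_recurrence]. *)
Definition zeil_cert (n k : nat) : R :=
  -4 * (INR n + 2) * INR k ^ 2 * binom_prod (S (S (S n))) k
  / ((INR n + INR k + 1) * (INR n + INR k + 2) * (INR n + INR k + 3)).

Lemma zeil_cert_diff (n k : nat) :
  ((INR n + 3) * binom_prod (S (S (S n))) k - (7 * INR n + 13) * binom_prod (S (S n)) k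
   + (7 * INR n + 15) * binom_prod (S n) k - (INR n + 1) * binom_prod n k)
  / (2 * INR k - 1)
  = zeil_cert n (S k) - zeil_cert n k.
Proof.
  pose proof (pos_INR n) as Hn. pose proof (pos_INR k) as Hk.
  pose proof (twice_INR_minus_1_neq_0 k) as Hk2.
  (* Every term is a rational multiple of [binom_prod (n + 3) k]. *)
  pose proof (eq_div_of_mul_eq _ _ _ _ (eq_sym (binom_prod_succ_l n k))
                ltac:(rewrite ?S_INR; lra)) as E0.
  pose proof (eq_div_of_mul_eq _ _ _ _ (eq_sym (binom_prod_succ_l (S n) k))
                ltac:(rewrite ?S_INR; lra)) as E1.
  pose proof (eq_div_of_mul_eq _ _ _ _ (eq_sym (binom_prod_succ_l (S (S n)) k))
                ltac:(rewrite ?S_INR; lra)) as E2.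
  pose proof (eq_div_of_mul_eq _ _ _ _ (binom_prod_succ_r (S (S (S n))) k)
                ltac:(apply pow_nonzero; lra)) as E3.
  unfold zeil_cert. rewrite E0, E1, E2, E3. rewrite !S_INR in *.
  field. repeat split; lra.
Qed.

Lemma Rseq_recurrence (n : nat) :
  (INR n + 3) * Rseq (S (S (S n))) - (7 * INR n + 13) * Rseq (S (S n))
  + (7 * INR n + 15) * Rseq (S n) - (INR n + 1) * Rseq n = 0.
Proof.
  rewrite !(fun m => Rseq_binom_prod m (S (S (S n)))) by lia.
  rewrite !scal_sum, <- minus_sum, <- sum_plus, <- minus_sum.
  rewrite (sum_eq _ (fun k => zeil_cert n (S k) - zeil_cert n k)).
  - rewrite sum_f_R0_telescope. unfold zeil_cert.
    rewrite binom_prod_out by lia. rewrite INR_0. unfold Rdiv. ring.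
  - intros k _. rewrite <- zeil_cert_diff. field. apply twice_INR_minus_1_neq_0.
Qed.

Definition lam : R := 3 + 2 * sqrt 2.

Lemma lam_sq : lam * lam = 6 * lam - 1.
Proof. unfold lam. pose proof (sqrt_sqrt 2 ltac:(lra)). nra. Qed.

Lemma lam_bounds : 5.82 < lam < 5.83.
Proof.
  unfold lam. pose proof (sqrt_sqrt 2 ltac:(lra)). pose proof (sqrt_pos 2).
  split; nra.
Qed.

Definition bound (t : R) : R := lam * (2 * t - 3) / (2 * t).

Lemma bseq_bound (n : nat) : (1 <= n)%nat -> bseq n = bound (INR n).
Proof.
  intros Hn. apply (le_INR 1) in Hn. simpl INR in Hn.
  unfold bseq, bound, lam. pose proof (sqrt_sqrt 2 ltac:(lra)). pose proof (sqrt_pos 2).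
  assert (E : 3 * (41 * sqrt 2 + 58) = (9 / 2 + 3 * sqrt 2) * (14 * sqrt 2 + 20)) by nra.
  rewrite E. field. lra.
Qed.

Lemma bound_pos (t : R) : 3 / 2 < t -> 0 < bound t.
Proof.
  intros Ht. pose proof lam_bounds. unfold bound.
  apply Rdiv_lt_0_compat; [apply Rmult_lt_0_compat |]; lra.
Qed.

Lemma one_lt_bound (t : R) : 2 <= t -> 1 < bound t.
Proof.
  intros Ht. pose proof lam_bounds. unfold bound.
  apply (Rmult_lt_reg_r (2 * t)); [lra |].
  unfold Rdiv. rewrite Rmult_assoc, Rinv_l by lra. nra.
Qed.

Lemma inv_bound (t : R) : 3 / 2 < t -> / bound t = (6 - lam) * (2 * t) / (2 * t - 3).
Proof.
  intros Ht. pose proof lam_bounds. pose proof lam_sq.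
  unfold bound. field_simplify_eq; [nra | lra].
Qed.

(* [r_(n+2)] in terms of [N = n] and the reciprocals [p = 1/r_n], [q = 1/r_(n+1)]. *)
Definition next_ratio (N p q : R) : R :=
  (7 * N + 13 - (7 * N + 15) * q + (N + 1) * p * q) / (N + 3).

Lemma rseq_succ_succ (n : nat) :
  Rseq n <> 0 -> Rseq (S n) <> 0 -> Rseq (S (S n)) <> 0 ->
  rseq (S (S n)) = next_ratio (INR n) (/ rseq n) (/ rseq (S n)).
Proof.
  intros H0 H1 H2. pose proof (pos_INR n). pose proof (Rseq_recurrence n) as Hrec.
  unfold rseq, next_ratio.
  replace (Rseq (S (S (S n)))) with
    (((7 * INR n + 13) * Rseq (S (S n)) - (7 * INR n + 15) * Rseq (S n)
      + (INR n + 1) * Rseq n) / (INR n + 3)).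
  - field. repeat split; auto; lra.
  - field_simplify_eq; lra.
Qed.

Lemma next_ratio_le_l (N p p' q : R) :
  0 <= N -> p <= p' -> 0 <= q -> next_ratio N p q <= next_ratio N p' q.
Proof.
  intros HN Hp Hq. unfold next_ratio, Rdiv.
  apply Rmult_le_compat_r; [apply Rlt_le, Rinv_0_lt_compat; lra |].
  assert (0 <= (N + 1) * (p' - p)) by nra. nra.
Qed.

Lemma next_ratio_lt_r (N p q q' : R) :
  0 <= N -> (N + 1) * p < 7 * N + 15 -> q < q' -> next_ratio N p q' < next_ratio N p q.
Proof.
  intros HN Hp Hq. unfold next_ratio, Rdiv.
  apply Rmult_lt_compat_r; [apply Rinv_0_lt_compat; lra |].
  assert (0 < (q' - q) * (7 * N + 15 - (N + 1) * p)) by (apply Rmult_lt_0_compat; lra).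
  nra.
Qed.

(* After clearing denominators both sides are quadratic in [lam]; modulo
   [lam^2 = 6 lam - 1] the difference is linear in [lam], and positive for [N >= 4]. *)
Lemma bound_lt_next_ratio (N : R) : 4 <= N ->
  bound (N + 2) < next_ratio N (/ bound (N + 1)) (/ bound (N + 1)).
Proof.
  intros HN. pose proof lam_bounds. pose proof lam_sq as Hsq.
  rewrite inv_bound by lra. unfold bound, next_ratio.
  apply Rlt_0_minus.
  match goal with |- 0 < ?d => replace d with
    ((1332 + 1782 * N + 558 * N ^ 2 - (219 + 327 * N + 90 * N ^ 2) * lam
      + (16 + 56 * N + 72 * N ^ 2 + 40 * N ^ 3 + 8 * N ^ 4) * (lam * lam - 6 * lam + 1))
     / ((N + 3) * (2 * N - 1) ^ 2 * (2 * N + 4))) by (field; lra) end.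
  rewrite Hsq. apply Rdiv_lt_0_compat.
  - assert (0 <= (219 + 327 * N + 90 * N ^ 2) * (5.83 - lam)) by (apply Rmult_le_pos; nra).
    nra.
  - apply Rmult_lt_0_compat; [apply Rmult_lt_0_compat |]; nra.
Qed.

Lemma next_ratio_lt_bound (N : R) : 4 <= N ->
  next_ratio N (/ bound N) (/ bound (N + 2)) < bound (N + 3).
Proof.
  intros HN. pose proof lam_bounds. pose proof lam_sq as Hsq.
  rewrite !inv_bound by lra. unfold bound, next_ratio.
  apply Rlt_0_minus.
  match goal with |- 0 < ?d => replace d with
    (((1053 + 909 * N + 186 * N ^ 2) * lam - (6246 + 5268 * N + 1062 * N ^ 2)
      - (48 * N + 88 * N ^ 2 + 48 * N ^ 3 + 8 * N ^ 4) * (lam * lam - 6 * lam + 1))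
     / ((N + 3) * (2 * N + 1) * (2 * N - 3) * (2 * N + 6))) by (field; lra) end.
  rewrite Hsq. apply Rdiv_lt_0_compat.
  - assert (0 <= (1053 + 909 * N + 186 * N ^ 2) * (lam - 5.82)) by (apply Rmult_le_pos; nra).
    nra.
  - apply Rmult_lt_0_compat; [apply Rmult_lt_0_compat; [apply Rmult_lt_0_compat |] |]; lra.
Qed.

Lemma next_ratio_bracket (N x y : R) : 4 <= N ->
  bound N < x < bound (N + 1) -> bound (N + 1) < y < bound (N + 2) ->
  bound (N + 2) < next_ratio N (/ x) (/ y) < bound (N + 3).
Proof.
  intros HN [Hx0 Hx1] [Hy1 Hy2].
  assert (Hinv : forall a b, 0 < a -> a < b -> / b < / a).
  { intros a b Ha Hab. apply Rinv_lt_contravar; [apply Rmult_lt_0_compat |]; lra. }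
  pose proof (bound_pos N ltac:(lra)). pose proof (bound_pos (N + 1) ltac:(lra)).
  pose proof (bound_pos (N + 2) ltac:(lra)).
  pose proof (Rinv_0_lt_compat y ltac:(lra)).
  pose proof (Hinv 1 (bound N) Rlt_0_1 (one_lt_bound N ltac:(lra))).
  pose proof (Hinv 1 (bound (N + 1)) Rlt_0_1 (one_lt_bound (N + 1) ltac:(lra))).
  rewrite Rinv_1 in *.
  split.
  - apply (Rlt_trans _ _ _ (bound_lt_next_ratio N HN)).
    apply (Rlt_le_trans _ (next_ratio N (/ bound (N + 1)) (/ y))).
    + apply next_ratio_lt_r; [lra | nra | apply Hinv; lra].
    + apply next_ratio_le_l; [lra | apply Rlt_le, Hinv; lra | lra].
  - apply (Rle_lt_trans _ (next_ratio N (/ bound N) (/ y))).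
    + apply next_ratio_le_l; [lra | apply Rlt_le, Hinv; lra | lra].
    + apply (Rlt_trans _ (next_ratio N (/ bound N) (/ bound (N + 2)))).
      * apply next_ratio_lt_r; [lra | nra | apply Hinv; lra].
      * apply next_ratio_lt_bound; lra.
Qed.

Lemma Rseq_initial : Rseq 0 = -1 /\ Rseq 1 = 1 /\ Rseq 2 = 7.
Proof. unfold Rseq, C; simpl; repeat split; field. Qed.

Lemma Rseq_3_to_6 : Rseq 3 = 25 /\ Rseq 4 = 87 /\ Rseq 5 = 329 /\ Rseq 6 = 1359.
Proof.
  destruct Rseq_initial as (H0 & H1 & H2).
  pose proof (Rseq_recurrence 0). pose proof (Rseq_recurrence 1).
  pose proof (Rseq_recurrence 2). pose proof (Rseq_recurrence 3).
  simpl INR in *. repeat split; lra.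
Qed.

Definition bracketed (n : nat) : Prop := bound (INR n) < rseq n < bound (INR (S n)).

Lemma Rseq_succ_pos (n : nat) : (2 <= n)%nat -> 0 < Rseq n -> bracketed n -> 0 < Rseq (S n).
Proof.
  intros Hn Hpos [Hlow _]. apply (le_INR 2) in Hn. simpl INR in Hn.
  pose proof (bound_pos (INR n) ltac:(lra)).
  replace (Rseq (S n)) with (rseq n * Rseq n) by (unfold rseq; field; lra).
  apply Rmult_lt_0_compat; lra.
Qed.

Lemma bracketed_from_4 (n : nat) : (4 <= n)%nat ->
  0 < Rseq n /\ bracketed n /\ bracketed (S n).
Proof.
  pose proof lam_bounds.
  induction 1 as [| n Hn (Hpos & Hbr & Hbr1)].
  - destruct Rseq_3_to_6 as (_ & H4 & H5 & H6).
    unfold bracketed, rseq, bound. rewrite H4, H5, H6. simpl INR.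
    repeat split; lra.
  - assert (Hpos1 : 0 < Rseq (S n)) by (apply Rseq_succ_pos; auto; lia).
    assert (Hpos2 : 0 < Rseq (S (S n))) by (apply Rseq_succ_pos; auto; lia).
    apply (le_INR 4) in Hn. simpl INR in Hn.
    split; [exact Hpos1 | split; [exact Hbr1 |]].
    unfold bracketed in *. rewrite rseq_succ_succ by lra.
    rewrite !S_INR in *.
    replace (INR n + 1 + 1 + 1) with (INR n + 3) by ring.
    replace (INR n + 1 + 1) with (INR n + 2) in * by ring.
    apply next_ratio_bracket; [lra | exact Hbr | exact Hbr1].
Qed.

Lemma bracketed_from_3 (n : nat) : (3 <= n)%nat -> bracketed n.
Proof.
  intros Hn. destruct (Nat.eq_dec n 3) as [-> | Hn3].
  - pose proof lam_bounds. destruct Rseq_3_to_6 as (H3 & H4 & _).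
    unfold bracketed, rseq, bound. rewrite H3, H4. simpl INR. lra.
  - apply bracketed_from_4. lia.
Qed.

Theorem lemma3p1 : forall n : nat, (3 <= n)%nat ->
  bseq n < rseq n /\ rseq n < bseq (S n).
Proof.
  intros n Hn. rewrite !bseq_bound by lia.
  exact (bracketed_from_3 n Hn).
Qed.
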